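(* $b\underline{\mathcal D}=b\overline{\mathcal D}=\overline{\mathcal{BD}}$.
   Context: $\mathbb N$ denotes the positive integers. For $A\subseteq\mathbb N$: lower density $\underline d(A)=\liminf_n \#\{k\le n:k\in A\}/n$, upper density $\overline d(A)=\limsup_n \#\{k\le n:k\in A\}/n$, upper Banach density $\overline{Bd}(A)=\lim_n\sup_k \#(A\cap[k,k+n])/n$. $\underline{\mathcal D}=\{A:\underline d(A)>0\}$, $\overline{\mathcal D}=\{A:\overline d(A)>0\}$, $\overline{\mathcal{BD}}=\{A:\overline{Bd}(A)>0\}$. For a family $\mathcal F$ of subsets of $\mathbb N$, the block family $b\mathcal F$ is defined by: $S\in b\mathcal F$ iff there is $F\in\mathcal F$ such that for every finite $R\subseteq F$ there is $n\in\mathbb N$ with $R+n=\{r+n:r\in R\}\subseteq S$. *)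

From Stdlib Require Import Reals List.
From Coquelicot Require Import Coquelicot.
Open Scope R_scope.

(* A subset of the positive integers is a boolean predicate on nat that is
   false at 0 (see [positive_set]). *)
Definition nset := nat -> bool.

Definition positive_set (A : nset) : Prop := forall k, A k = true -> (0 < k)%nat.

Fixpoint cnt (A : nset) (a len : nat) : nat :=
  match len with
  | O => O
  | S l => ((if A (a + l)%nat then 1 else 0) + cnt A a l)%nat
  end.

Definition dens_seq (A : nset) (n : nat) : R := INR (cnt A 1 n) / INR n.

Definition lower_density (A : nset) : Rbar := LimInf_seq (dens_seq A).
Definition upper_density (A : nset) : Rbar := LimSup_seq (dens_seq A).

(* sup_{k in N+} #(A ∩ [k, k+n]) / n ; [k,k+n] has n+1 elements *)
Definition banach_seq (A : nset) (n : nat) : R :=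
  real (Sup_seq (fun k => INR (cnt A (S k) (S n)) / INR n)).

Definition upper_banach_density (A : nset) : Rbar := Lim_seq (banach_seq A).

Definition Dlow (A : nset) : Prop := positive_set A /\ Rbar_lt 0 (lower_density A).
Definition Dup (A : nset) : Prop := positive_set A /\ Rbar_lt 0 (upper_density A).
Definition BDup (A : nset) : Prop :=
  positive_set A /\ Rbar_lt 0 (upper_banach_density A).

Definition block (F : nset -> Prop) (S : nset) : Prop :=
  exists A : nset, F A /\
    forall R : list nat, (forall r, In r R -> A r = true) ->
      exists n : nat, (0 < n)%nat /\ forall r, In r R -> S (r + n)%nat = true.

From Stdlib Require Import Reals List Lia Lra Classical ClassicalEpsilon.
From Coquelicot Require Import Coquelicot.
Open Scope R_scope.

(** All three conditions on [S] are equivalent to: for some [c > 0], every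
    length [M] admits a window of [M] consecutive integers containing at least
    [c M] elements of [S].  If [A] has upper density [> b] and all finite
    subsets of [A] translate into [S], then translating long initial segments
    of [A] shows that windows of density [b/2] exist in [S] for every length;
    and such windows are exactly positive upper Banach density.  Conversely,
    inside a long dense window one finds starting points from which every
    prefix up to a given length has density [>= c/2]; a König argument on the
    patterns of [S] seen from these points produces a set [A] of lower density
    [>= c/2] each of whose finite pieces is a translate of a piece of [S]. *)

Lemma cnt_add A a l1 l2 : cnt A a (l1 + l2) = (cnt A a l1 + cnt A (a + l1) l2)%nat.
Proof.
  induction l2 as [|l2 IH]; cbn [cnt].
  - rewrite Nat.add_0_r; simpl; lia.
  - rewrite Nat.add_succ_r; cbn [cnt]; rewrite IH.
    replace (a + (l1 + l2))%nat with (a + l1 + l2)%nat by lia; lia.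
Qed.

Lemma cnt_le_len A a l : (cnt A a l <= l)%nat.
Proof. induction l; cbn [cnt]; [lia | destruct (A (a + l)%nat); lia]. Qed.

Lemma cnt_mono_len A a l l' : (l <= l')%nat -> (cnt A a l <= cnt A a l')%nat.
Proof.
  intros H; replace l' with (l + (l' - l))%nat by lia; rewrite cnt_add; lia.
Qed.

Lemma cnt_mono A B a b l :
  (forall i, (i < l)%nat -> A (a + i)%nat = true -> B (b + i)%nat = true) ->
  (cnt A a l <= cnt B b l)%nat.
Proof.
  induction l as [|l IH]; intros H; cbn [cnt]; [lia|].
  assert (IHl := IH (fun i Hi => H i (Nat.lt_lt_succ_r _ _ Hi))).
  specialize (H l (Nat.lt_succ_diag_r l)).
  destruct (A (a + l)%nat); [rewrite H by reflexivity | destruct (B (b + l)%nat)]; lia.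
Qed.

Lemma cnt_ext A B a b l :
  (forall i, (i < l)%nat -> A (a + i)%nat = B (b + i)%nat) ->
  cnt A a l = cnt B b l.
Proof.
  intros H; apply Nat.le_antisymm; apply cnt_mono; intros i Hi E;
    rewrite <- E; [symmetry|]; auto.
Qed.

(* Cut [a, a + l) into [l / p] windows of length p plus a shorter rest. *)
Lemma cnt_le_of_windows T p d : (0 < p)%nat ->
  (forall k, INR (cnt T (S k) p) <= d * INR p) ->
  forall l a, (1 <= a)%nat -> INR (cnt T a l) <= d * (INR l + INR p).
Proof.
  intros Hp Hwin.
  assert (Pp : 0 < INR p) by (apply lt_0_INR; exact Hp).
  assert (Hd : 0 <= d).
  { pose proof (pos_INR (cnt T 1 p)); pose proof (Hwin O); nra. }
  assert (Hwin' : forall a, (1 <= a)%nat -> INR (cnt T a p) <= d * INR p).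
  { intros a Ha; replace a with (S (a - 1)) by lia; apply Hwin. }
  intros l; induction l as [l IH] using (well_founded_induction Wf_nat.lt_wf).
  intros a Ha.
  destruct (Nat.lt_ge_cases l p) as [Hl|Hl].
  - pose proof (le_INR _ _ (cnt_mono_len T a l p (Nat.lt_le_incl _ _ Hl))).
    pose proof (Hwin' a Ha); pose proof (pos_INR l); nra.
  - replace l with (p + (l - p))%nat by lia.
    rewrite cnt_add, !plus_INR.
    pose proof (Hwin' a Ha).
    pose proof (IH (l - p)%nat ltac:(lia) (a + p)%nat ltac:(lia)); lra.
Qed.

Lemma real_Sup_seq_bounds (u : nat -> R) B : (forall k, u k <= B) ->
  forall k, u k <= real (Sup_seq (fun k => Finite (u k))) <= B.
Proof.
  intros HB k.
  assert (Hlow : Rbar_le (u k) (Sup_seq (fun k => Finite (u k))))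
    by (apply Sup_seq_minor_le with k; apply Rle_refl).
  assert (Hup : Rbar_le (Sup_seq (fun k => Finite (u k))) B).
  { apply Rbar_not_lt_le; intros H; apply Sup_seq_minor_lt in H.
    destruct H as [n Hn]; specialize (HB n); simpl in Hn; lra. }
  destruct (Sup_seq (fun k => Finite (u k))); simpl in *; tauto.
Qed.

Lemma Rbar_lt_0_between x : Rbar_lt 0 x -> exists b, 0 < b /\ Rbar_lt b x.
Proof.
  destruct x as [r| |]; simpl; intros H.
  - exists (r / 2); split; lra.
  - exists 1; split; [lra | exact I].
  - contradiction.
Qed.

Lemma upper_banach_density_pos T :
  Rbar_lt 0 (upper_banach_density T) <->
  exists c, 0 < c /\
    forall M, (1 <= M)%nat -> exists k, c * INR M <= INR (cnt T (S k) M).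
Proof.
  split.
  - intros Hpos. destruct (Rbar_lt_0_between _ Hpos) as [b [Hb Hbd]].
    exists (b / 3); split; [lra|].
    intros M HM; apply NNPP; intros Hsparse.
    assert (Hwin : forall k, INR (cnt T (S k) M) <= b / 3 * INR M).
    { intros k; apply Rnot_lt_le; intros H; apply Hsparse; exists k; lra. }
    assert (PM : 0 < INR M) by (apply lt_0_INR; lia).
    assert (Hsmall : forall n, (S M <= n)%nat -> banach_seq T n <= 2 * (b / 3)).
    { intros n Hn.
      assert (Pn : 0 < INR n) by (apply lt_0_INR; lia).
      apply le_INR in Hn; rewrite S_INR in *.
      assert (Hbound : forall k, INR (cnt T (S k) (S n)) / INR n
                                 <= b / 3 * (INR (S n) + INR M) / INR n).
      { intros k; apply Rmult_le_compat_r; [left; apply Rinv_0_lt_compat, Pn|].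
        apply (cnt_le_of_windows T M); [lia | exact Hwin | lia]. }
      apply Rle_trans with (1 := proj2 (real_Sup_seq_bounds _ _ Hbound O)).
      apply Rmult_le_reg_r with (INR n); [exact Pn|].
      rewrite S_INR; field_simplify; nra. }
    assert (Hle : Rbar_le (upper_banach_density T) (2 * (b / 3))).
    { rewrite <- (Lim_seq_const (2 * (b / 3))).
      apply Lim_seq_le_loc; exists (S M); exact Hsmall. }
    assert (Rbar_lt b (2 * (b / 3))) by (eapply Rbar_lt_le_trans; eauto).
    simpl in *; lra.
  - intros [c [Hc Hdense]].
    assert (Hlarge : forall m, (1 <= m)%nat -> c <= banach_seq T m).
    { intros m Hm; destruct (Hdense (S m) ltac:(lia)) as [k Hk].
      assert (Pm : 0 < INR m) by (apply lt_0_INR; lia).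
      assert (Hbound : forall j, INR (cnt T (S j) (S m)) / INR m <= INR (S m) / INR m).
      { intros j; apply Rmult_le_compat_r; [left; apply Rinv_0_lt_compat, Pm|].
        apply le_INR, cnt_le_len. }
      apply Rle_trans with (2 := proj1 (real_Sup_seq_bounds _ _ Hbound k)).
      apply Rmult_le_reg_r with (INR m); [exact Pm|].
      rewrite S_INR in Hk; field_simplify; nra. }
    apply Rbar_lt_le_trans with c; [exact Hc|].
    rewrite <- (Lim_seq_const c); apply Lim_seq_le_loc; exists 1%nat; exact Hlarge.
Qed.

Definition embeds (A T : nset) : Prop :=
  forall R : list nat, (forall r, In r R -> A r = true) ->
    exists n : nat, (0 < n)%nat /\ forall r, In r R -> T (r + n)%nat = true.

Lemma cnt_le_shift_of_embeds A T L :
  embeds A T -> exists n, (cnt A 1 L <= cnt T (S n) L)%nat.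
Proof.
  intros HAT.
  destruct (HAT (filter A (seq 1 L))) as [n [_ Hn]].
  { intros r Hr; apply filter_In in Hr; tauto. }
  exists n; apply cnt_mono; intros i Hi Ai.
  replace (S n + i)%nat with ((1 + i) + n)%nat by lia.
  apply Hn, filter_In; split; [apply in_seq; lia | exact Ai].
Qed.

Lemma LimSup_seq_frequently_gt (u : nat -> R) (b : R) :
  Rbar_lt b (LimSup_seq u) -> forall N, exists n, (N <= n)%nat /\ b < u n.
Proof.
  intros Hb N; apply NNPP; intros Hnone.
  assert (Hev : eventually (fun n => u n <= b)).
  { exists N; intros n Hn; apply Rnot_lt_le; intros H; apply Hnone; exists n; auto. }
  apply LimSup_le in Hev; rewrite LimSup_seq_const in Hev.
  pose proof (Rbar_lt_le_trans _ _ _ Hb Hev); simpl in *; lra.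
Qed.

Lemma block_Dup_dense_windows T :
  block Dup T ->
  exists c, 0 < c /\
    forall M, (1 <= M)%nat -> exists k, c * INR M <= INR (cnt T (S k) M).
Proof.
  intros [A [[_ Hd] HAT]]; change (embeds A T) in HAT.
  destruct (Rbar_lt_0_between _ Hd) as [b [Hb Hbd]].
  exists (b / 2); split; [lra|].
  intros M HM; apply NNPP; intros Hsparse.
  assert (Hwin : forall k, INR (cnt T (S k) M) <= b / 2 * INR M).
  { intros k; apply Rnot_lt_le; intros H; apply Hsparse; exists k; lra. }
  destruct (LimSup_seq_frequently_gt _ _ Hbd M) as [L [HL HdL]].
  destruct (cnt_le_shift_of_embeds A T L HAT) as [n Hn].
  assert (PL : 0 < INR L) by (apply lt_0_INR; lia).
  unfold dens_seq in HdL.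
  apply Rmult_lt_compat_r with (r := INR L) in HdL; [|exact PL].
  replace (INR (cnt A 1 L) / INR L * INR L) with (INR (cnt A 1 L)) in HdL
    by (field; lra).
  pose proof (le_INR _ _ Hn).
  pose proof (cnt_le_of_windows T M (b / 2) ltac:(lia) Hwin L (S n) ltac:(lia)).
  apply le_INR in HL.
  assert (b * INR M <= b * INR L) by (apply Rmult_le_compat_l; lra).
  lra.
Qed.

Lemma exists_argmin_le (f : nat -> R) M :
  exists p, (p <= M)%nat /\ forall q, (q <= M)%nat -> f p <= f q.
Proof.
  induction M as [|M [p [Hp Hmin]]].
  - exists O; split; [lia|]; intros q Hq; replace q with O by lia; lra.
  - destruct (Rle_lt_dec (f p) (f (S M))) as [Hle|Hlt].
    + exists p; split; [lia|]; intros q Hq.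
      destruct (Nat.eq_dec q (S M)); [subst; exact Hle | apply Hmin; lia].
    + exists (S M); split; [lia|]; intros q Hq.
      destruct (Nat.eq_dec q (S M)); [subst; lra|].
      pose proof (Hmin q ltac:(lia)); lra.
Qed.

(* Take a window [a, a + M) with at least c M points and let p minimise
   cnt T a p - c/2 p over p <= M: every prefix of [a + p, a + M) then has
   density at least c/2, and comparing p with 0 shows that M - p >= c/2 M,
   which exceeds N once M is large. *)
Lemma exists_dense_start T c N : 0 < c ->
  (forall M, (1 <= M)%nat -> exists k, c * INR M <= INR (cnt T (S k) M)) ->
  exists s, (1 <= s)%nat /\
    forall L, (L <= N)%nat -> c / 2 * INR L <= INR (cnt T s L).
Proof.
  intros Hc Hdense.
  destruct (INR_unbounded (2 * INR N / c)) as [M0 HM0].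
  set (M := S M0).
  assert (HMN : INR N < c / 2 * INR M).
  { unfold M; rewrite S_INR.
    apply Rmult_gt_compat_l with (r := c / 2) in HM0; [|lra].
    replace (c / 2 * (2 * INR N / c)) with (INR N) in HM0 by (field; lra); nra. }
  destruct (Hdense M ltac:(unfold M; lia)) as [k Hk].
  set (a := S k) in Hk |- *.
  destruct (exists_argmin_le (fun p => INR (cnt T a p) - c / 2 * INR p) M)
    as [p [Hp Hmin]].
  assert (Hsplit : forall L,
             INR (cnt T a (p + L)) = INR (cnt T a p) + INR (cnt T (a + p) L))
    by (intros L; rewrite cnt_add, plus_INR; reflexivity).
  assert (Hroom : INR N <= INR (M - p)).
  { pose proof (Hmin O ltac:(lia)) as Hmin0; simpl in Hmin0.
    replace (cnt T a M) with (cnt T a (p + (M - p))) in Hk by (f_equal; lia).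
    rewrite Hsplit in Hk.
    pose proof (le_INR _ _ (cnt_le_len T (a + p) (M - p))).
    assert (c / 2 * INR p <= c / 2 * INR M)
      by (apply Rmult_le_compat_l; [lra | apply le_INR; exact Hp]).
    rewrite minus_INR in * by exact Hp; lra. }
  exists (a + p)%nat; split; [unfold a; lia|].
  intros L HL.
  assert (HpL : (p + L <= M)%nat).
  { apply INR_le; rewrite plus_INR; apply le_INR in HL.
    rewrite minus_INR in Hroom by exact Hp; lra. }
  pose proof (Hmin (p + L)%nat HpL) as HminL.
  rewrite Hsplit, plus_INR in HminL; lra.
Qed.

Section GoodShiftCompactness.

Variable T : nset.
Variable Good : nat -> nat -> Prop.
Hypothesis Good_antitone : forall N N' n, (N' <= N)%nat -> Good N n -> Good N' n.
Hypothesis Good_exists : forall N, exists n, Good N n.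

Definition realised (m : nat) (w : nset) : Prop :=
  forall N, exists n, Good N n /\ forall r, (1 <= r <= m)%nat -> w r = T (r + n)%nat.

Definition set_at (w : nset) (m : nat) (b : bool) : nset :=
  fun r => if Nat.eqb r m then b else w r.

Lemma realised_extend m w : realised m w ->
  realised (S m) (set_at w (S m) true) \/ realised (S m) (set_at w (S m) false).
Proof.
  intros Hw; apply NNPP; intros Hnone; apply not_or_and in Hnone.
  destruct Hnone as [Htrue Hfalse].
  apply not_all_ex_not in Htrue, Hfalse.
  destruct Htrue as [N1 Htrue], Hfalse as [N0 Hfalse].
  destruct (Hw (Nat.max N0 N1)) as [n [Hgood Hagree]].
  assert (Hext : forall b, T (S m + n)%nat = b ->
            forall r, (1 <= r <= S m)%nat -> set_at w (S m) b r = T (r + n)%nat).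
  { intros b Hb r Hr; unfold set_at.
    destruct (Nat.eqb_spec r (S m)); [subst; auto | apply Hagree; lia]. }
  destruct (T (S m + n)%nat) eqn:E; [apply Htrue | apply Hfalse];
    exists n; (split; [apply Good_antitone with (2 := Hgood); lia | apply Hext; auto]).
Qed.

Fixpoint realised_prefix (m : nat) : nset :=
  match m with
  | O => fun _ => false
  | S m' =>
      let w := realised_prefix m' in
      if excluded_middle_informative (realised m (set_at w m true))
      then set_at w m true else set_at w m false
  end.

Lemma realised_prefix_realised m : realised m (realised_prefix m).
Proof.
  induction m as [|m IH].
  - intros N; destruct (Good_exists N) as [n Hn].
    exists n; split; [exact Hn | intros r Hr; lia].
  - simpl; destruct (excluded_middle_informative _) as [Htrue|Hnot]; [exact Htrue|].
    destruct (realised_extend _ _ IH); tauto.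
Qed.

Lemma realised_prefix_stable r d : realised_prefix (r + d) r = realised_prefix r r.
Proof.
  induction d as [|d IH]; [now rewrite Nat.add_0_r|].
  rewrite Nat.add_succ_r; simpl.
  destruct (excluded_middle_informative _); unfold set_at;
    destruct (Nat.eqb_spec r (S (r + d))); try lia; exact IH.
Qed.

(* König's lemma: the diagonal of the nested prefixes. *)
Lemma exists_pattern_of_good_shifts :
  exists A : nset, A 0%nat = false /\
    forall m, exists n, Good m n /\ forall r, (1 <= r <= m)%nat -> A r = T (r + n)%nat.
Proof.
  exists (fun r => realised_prefix r r); split; [reflexivity|].
  intros m; destruct (realised_prefix_realised m m) as [n [Hgood Hagree]].
  exists n; split; [exact Hgood|]; intros r Hr.
  rewrite <- Hagree by exact Hr.
  replace m with (r + (m - r))%nat by lia; symmetry; apply realised_prefix_stable.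
Qed.

End GoodShiftCompactness.

Lemma lower_density_pos_of_prefix_bound A d : 0 < d ->
  (forall L, d * INR L <= 1 + INR (cnt A 1 L)) -> Rbar_lt 0 (lower_density A).
Proof.
  intros Hd Hprefix.
  destruct (INR_unbounded (2 / d)) as [N HN].
  assert (Hev : eventually (fun L => d / 2 <= dens_seq A L)).
  { exists (S N); intros L HL; unfold dens_seq.
    apply le_INR in HL; rewrite S_INR in HL.
    assert (PL : 0 < INR L) by (pose proof (pos_INR N); lra).
    apply Rmult_le_reg_r with (INR L); [exact PL|].
    replace (INR (cnt A 1 L) / INR L * INR L) with (INR (cnt A 1 L)) by (field; lra).
    assert (2 < d * INR L).
    { apply Rmult_gt_compat_l with (r := d) in HN; [|exact Hd].
      replace (d * (2 / d)) with 2 in HN by (field; lra); nra. }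
    pose proof (Hprefix L); lra. }
  apply LimInf_le in Hev; rewrite LimInf_seq_const in Hev.
  apply Rbar_lt_le_trans with (d / 2); [simpl; lra | exact Hev].
Qed.

Lemma block_Dlow_of_dense_windows T c : 0 < c ->
  (forall M, (1 <= M)%nat -> exists k, c * INR M <= INR (cnt T (S k) M)) ->
  block Dlow T.
Proof.
  intros Hc Hdense.
  set (Good := fun N n => (1 <= n)%nat /\
         forall L, (L <= N)%nat -> c / 2 * INR L <= 1 + INR (cnt T (S n) L)).
  assert (Good_antitone : forall N N' n, (N' <= N)%nat -> Good N n -> Good N' n).
  { intros N N' n HN [Hn Hdens]; split; [exact Hn|]; intros L HL; apply Hdens; lia. }
  assert (Good_exists : forall N, exists n, Good N n).
  { intros N; destruct (exists_dense_start T c (S N) Hc Hdense) as [s [Hs Hdens]].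
    exists s; split; [exact Hs|]; intros L HL.
    specialize (Hdens (S L) ltac:(lia)).
    replace (S L) with (1 + L)%nat in Hdens at 2 by lia.
    rewrite cnt_add, plus_INR, S_INR in Hdens.
    pose proof (le_INR _ _ (cnt_le_len T s 1)).
    replace (s + 1)%nat with (S s) in Hdens by lia; simpl in *; lra. }
  destruct (exists_pattern_of_good_shifts T Good Good_antitone Good_exists)
    as [A [HA0 HA]].
  assert (HApos : positive_set A).
  { intros [|k] Hk; [congruence | lia]. }
  exists A; split; [split; [exact HApos|]|].
  - apply (lower_density_pos_of_prefix_bound A (c / 2)); [lra|].
    intros L; destruct (HA L) as [n [[_ Hdens] Hagree]].
    replace (cnt A 1 L) with (cnt T (S n) L); [apply Hdens; lia|].
    apply cnt_ext; intros i Hi; rewrite Hagree by lia; f_equal; lia.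
  - intros R HR; destruct (HA (list_max R)) as [n [[Hn _] Hagree]].
    exists n; split; [exact Hn|]; intros r Hr.
    assert (r <= list_max R)%nat.
    { pose proof (proj1 (list_max_le R (list_max R)) (le_n _)) as Hall.
      rewrite Forall_forall in Hall; auto. }
    rewrite <- Hagree by (pose proof (HApos r (HR r Hr)); lia); auto.
Qed.

Lemma block_Dup_of_block_Dlow T : block Dlow T -> block Dup T.
Proof.
  intros [A [[HA Hd] HAT]]; exists A; split; [split; [exact HA|] | exact HAT].
  eapply Rbar_lt_le_trans; [exact Hd | apply LimSup_LimInf_seq_le].
Qed.

Theorem mainTheorem2 :
  forall S : nset, positive_set S ->
    (block Dlow S <-> block Dup S) /\ (block Dup S <-> BDup S).
Proof.
  intros T HT.
  assert (up_bd : block Dup T -> BDup T).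
  { intros H; split; [exact HT|].
    apply upper_banach_density_pos, block_Dup_dense_windows, H. }
  assert (bd_low : BDup T -> block Dlow T).
  { intros [_ H]; apply upper_banach_density_pos in H.
    destruct H as [c [Hc Hdense]]; exact (block_Dlow_of_dense_windows T c Hc Hdense). }
  pose proof (block_Dup_of_block_Dlow T).
  split; split; tauto.
Qed.
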